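(* Let $\tilde g$ be a continuous totally positive function of one of the following forms: either $\tilde g=g$ with $$\hat g(\omega)=\prod_{\nu=1}^{\infty}\frac{e^{2\pi i\omega/a_\nu}}{1+2\pi i\omega/a_\nu},$$ where $(a_\nu)_{\nu\in\mathbb{N}}\subset\mathbb{R}\setminus\{0\}$ with $\sum_{\nu}a_\nu^{-2}<\infty$, or $\tilde g=g_n$ with $$\hat g_n(\omega)=\prod_{\nu=1}^{n}\frac{e^{2\pi i\omega/a_\nu}}{1+2\pi i\omega/a_\nu},\qquad a_1,\dots,a_n\in\mathbb{R}\setminus\{0\}.$$ Then the function $x\mapsto\mathrm Z\tilde g(x,\tfrac12)$ is real-valued, $2$-periodic, and not identically zero.
   Context: The Fourier transform is $\hat f(\omega)=\int_{\mathbb{R}} f(t)e^{-2\pi i t\omega}\,dt$. The Zak transform is $\mathrm Zf(x,\omega)=\sum_{k\in\mathbb{Z}} f(x+k)e^{-2\pi i k\omega}$; in particular $\mathrm Z\tilde g(x,\tfrac12)=\sum_{k\in\mathbb{Z}}(-1)^k\tilde g(x+k)$. *)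

From Stdlib Require Import Reals.
From mathcomp Require Import all_boot all_algebra.
From mathcomp Require Import Rstruct.
From Coquelicot Require Import Coquelicot.

Set Implicit Arguments.
Unset Strict Implicit.
Unset Printing Implicit Defensive.

Definition totally_positive (f : R -> R) : Prop :=
  forall (n : nat) (x y : 'I_n -> R),
    (forall i j : 'I_n, (i < j)%N -> Rlt (x i) (x j)) ->
    (forall i j : 'I_n, (i < j)%N -> Rlt (y i) (y j)) ->
    Rle 0%R (\det (\matrix_(i < n, j < n) f (Rminus (x i) (y j))))%R.

Open Scope R_scope.

Definition cexpi (theta : R) : C := (cos theta, sin theta).

Definition is_fourier (f : R -> R) (w : R) (v : C) : Prop :=
  is_RInt_gen (fun t => Cmult (RtoC (f t)) (cexpi (- (2 * PI * t * w))))
    (Rbar_locally m_infty) (Rbar_locally p_infty) v.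

Definition factor (a w : R) : C :=
  Cdiv (cexpi (2 * PI * w / a)) (Cplus (RtoC 1) (Cmult Ci (RtoC (2 * PI * w / a)))).

(* Partial product  prod_{nu = 1}^{N} factor (a_nu) w,  where the sequence
   (a_nu)_{nu >= 1} is encoded by a : nat -> R with a_nu = a (nu - 1). *)
Fixpoint partial_prod (a : nat -> R) (w : R) (N : nat) : C :=
  match N with
  | O => RtoC 1
  | S N' => Cmult (partial_prod a w N') (factor (a N') w)
  end.

(* Zak transform at omega = 1/2:  Z f (x, 1/2) = sum_{k in Z} (-1)^k f(x+k),
   the bi-infinite series being the sum of its two convergent halves
   sum_{k >= 0} (-1)^k f(x+k)  and  sum_{k >= 1} (-1)^k f(x-k). *)
Definition is_zak_half (f : R -> R) (x z : R) : Prop :=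
  exists s1 s2 : R,
    is_series (fun k : nat => (-1) ^ k * f (x + INR k)) s1 /\
    is_series (fun k : nat => (-1) ^ (S k) * f (x - INR (S k))) s2 /\
    z = s1 + s2.

(* Total positivity gives g >= 0 and, from a 2 x 2 minor, g u g (v + 1) <= g (u + 1) g v for
   u <= v: the ratio g (u + 1) / g u is nonincreasing.  As g is integrable (its Fourier
   transform exists at 0), g cannot be nondecreasing along unit steps, so it decays
   geometrically at +oo, and likewise at -oo.  Hence both halves of the alternating series
   Z g (x, 1/2) converge, and replacing x by x + 1 changes the sign of the sum, which gives
   2-periodicity.  Cutting R into unit intervals, the integral of g phi for any 1-antiperiodic
   bounded phi equals the integral over [0, 1] of Z g (., 1/2) phi; with phi (t) = e^{-i pi t}
   this is the Fourier transform of g at 1/2.  So Z g (., 1/2) = 0 would force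
   ghat (1/2) = 0, whereas |ghat (1/2)|^2 is the (finite or limiting) product of the
   1 / (1 + (pi / a_nu)^2) >= exp (- (pi / a_nu)^2), hence at least exp (- pi^2 sum a_nu^-2). *)

From Stdlib Require Import Reals Lra Lia Classical FunctionalExtensionality.
From Coquelicot Require Import Coquelicot.
From mathcomp Require all_boot all_algebra Rstruct.
Open Scope R_scope.

Module TotalPositivity.
Import mathcomp.boot.all_boot mathcomp.algebra.all_algebra mathcomp.reals_stdlib.Rstruct.
Open Scope R_scope.

Lemma ge0 g : totally_positive g -> forall t, 0 <= g t.
Proof.
intros H t.
pose proof (H 1%nat (fun _ => t) (fun _ => 0)) as H1.
rewrite det_mx11 mxE Rminus_0_r in H1.
apply H1; intros i j; rewrite (ord1 i) (ord1 j); by [].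
Qed.

(* The 2 x 2 minor at x = (0, v - u), y = (-u - 1, -u). *)
Lemma shift_ineq g : totally_positive g ->
  forall u v, u <= v -> g u * g (v + 1) <= g (u + 1) * g v.
Proof.
intros H u v Huv.
destruct (Req_dec u v) as [->|Hne]; [lra|].
pose (x := fun i : 'I_2 => if val i == 0%N then 0 else v - u).
pose (y := fun i : 'I_2 => if val i == 0%N then - u - 1 else - u).
have Hx : forall i j : 'I_2, (i < j)%N -> x i < x j.
  by move=> [[|[|i]] Hi] [[|[|j]] Hj] //= _; rewrite /x /=; lra.
have Hy : forall i j : 'I_2, (i < j)%N -> y i < y j.
  by move=> [[|[|i]] Hi] [[|[|j]] Hj] //= _; rewrite /y /=; lra.
pose proof (H 2%nat x y Hx Hy) as Hdet.
rewrite (expand_det_row _ ord0) !big_ord_recl big_ord0 /cofactor !det_mx11 !mxE /x /y /=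
  GRing.expr0 GRing.expr1 in Hdet.
change (0 <= g (0 - (- u - 1)) * (1 * g (v - u - - u))
  + (g (0 - - u) * (- (1) * g (v - u - (- u - 1))) + 0)) in Hdet.
replace (0 - (- u - 1)) with (u + 1) in Hdet by lra.
replace (v - u - - u) with v in Hdet by lra.
replace (0 - - u) with u in Hdet by lra.
replace (v - u - (- u - 1)) with (v + 1) in Hdet by lra.
lra.
Qed.

End TotalPositivity.

(** * Integrals of continuous functions *)

Lemma ex_RInt_cont (f : R -> R) a b : (forall t, continuous f t) -> ex_RInt f a b.
Proof. intros Hc. apply (ex_RInt_continuous (V := R_CompleteNormedModule)); auto. Qed.

Lemma RInt_ge0 (f : R -> R) a b : a <= b -> (forall t, continuous f t) ->
  (forall t, 0 <= f t) -> 0 <= RInt f a b.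
Proof. intros; apply RInt_ge_0; auto. apply ex_RInt_cont; auto. Qed.

Lemma RInt_ge_const (f : R -> R) a b c : a <= b -> (forall t, continuous f t) ->
  (forall t, a <= t <= b -> c <= f t) -> c * (b - a) <= RInt f a b.
Proof.
intros Hab Hc H.
replace (c * (b - a)) with (RInt (fun _ => c) a b)
  by (rewrite RInt_const; unfold scal; simpl; unfold mult; simpl; ring).
apply RInt_le; auto.
- apply ex_RInt_const.
- apply ex_RInt_cont; auto.
- intros; apply H; lra.
Qed.

Lemma RInt_shift (f : R -> R) v a b : (forall t, continuous f t) ->
  RInt (fun x => f (x + v)) a b = RInt f (a + v) (b + v).
Proof.
intros Hc. pose proof (RInt_comp_lin (V := R_CompleteNormedModule) f 1 v a b) as H.
rewrite !Rmult_1_l in H. rewrite <- H by (apply ex_RInt_cont; auto).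
apply RInt_ext. intros x _. unfold scal; simpl; unfold mult; simpl.
rewrite !Rmult_1_l. reflexivity.
Qed.

Lemma RInt_reflect (f : R -> R) a b : (forall t, continuous f t) ->
  RInt (fun t => f (- t)) a b = RInt f (- b) (- a).
Proof.
intros Hc. apply is_RInt_unique.
apply (is_RInt_ext (fun t => opp (opp (f (- t))))); [intros; apply opp_opp|].
rewrite <- (opp_opp (RInt f (- b) (- a))).
apply (is_RInt_opp (V := R_NormedModule)), (is_RInt_swap (V := R_NormedModule)),
  (is_RInt_comp_opp (V := R_NormedModule)).
apply (RInt_correct (V := R_CompleteNormedModule)), ex_RInt_cont; auto.
Qed.

Lemma RInt_le_improper (f : R -> R) L : (forall t, continuous f t) -> (forall t, 0 <= f t) ->
  is_RInt_gen f (Rbar_locally m_infty) (Rbar_locally p_infty) L ->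
  forall a b, a <= b -> RInt f a b <= L.
Proof.
intros Hc Hp HL a b Hab. apply Rle_plus_epsilon. intros eps Heps.
destruct (HL (ball L (mkposreal _ Heps)) (locally_ball _ _)) as [Q P [M1 HM1] [M2 HM2] Hqr].
pose proof (Rmin_l a (M1 - 1)). pose proof (Rmin_r a (M1 - 1)).
pose proof (Rmax_l b (M2 + 1)). pose proof (Rmax_r b (M2 + 1)).
set (a' := Rmin a (M1 - 1)) in *. set (b' := Rmax b (M2 + 1)) in *.
destruct (Hqr a' b') as [y [Hy Hball]]; [apply HM1; lra | apply HM2; lra |].
simpl in Hy. rewrite <- (is_RInt_unique f _ _ y Hy) in Hball.
apply Rabs_lt_between in Hball. simpl in Hball.
rewrite <- (RInt_Chasles f a' a b'), <- (RInt_Chasles f a b b') in Hball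
  by (apply ex_RInt_cont; auto).
pose proof (RInt_ge0 f a' a ltac:(lra) Hc Hp). pose proof (RInt_ge0 f b b' ltac:(lra) Hc Hp).
unfold minus, plus, opp in Hball; simpl in Hball. lra.
Qed.

(** * Geometric decay *)

Lemma continuous_ge_half_right (f : R -> R) p : continuous f p -> 0 < f p ->
  exists d, 0 < d <= 1 /\ forall r, 0 <= r <= d -> f p / 2 <= f (p + r).
Proof.
intros Hc Hp.
assert (He : 0 < f p / 2) by lra.
destruct (Hc (ball (f p) (mkposreal _ He)) (locally_ball _ _)) as [d Hd].
pose proof (cond_pos d). pose proof (Rmin_l (d / 2) 1). pose proof (Rmin_r (d / 2) 1).
exists (Rmin (d / 2) 1). split; [split; [apply Rmin_pos|]; lra|].
intros r Hr.
assert (Hball : ball p d (p + r)).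
{ unfold ball; simpl; unfold AbsRing_ball, abs, minus, plus, opp; simpl.
  rewrite Rabs_right; lra. }
specialize (Hd _ Hball).
unfold ball in Hd; simpl in Hd; unfold AbsRing_ball, abs, minus, plus, opp in Hd; simpl in Hd.
apply Rabs_lt_between in Hd. lra.
Qed.

Lemma nat_above r : exists K : nat, r <= INR K.
Proof. destruct (INR_archimed 1 r) as [K HK]; [lra|]. exists K. lra. Qed.

(* Iterating the step inequality, f >= f p0 / 2 on [p0 + k, p0 + k + d] for every k. *)
Lemma RInt_unbounded_of_step_nondecreasing (f : R -> R) p0 :
  (forall t, continuous f t) -> (forall t, 0 <= f t) -> 0 < f p0 ->
  (forall p, 0 < f p -> f p <= f (p + 1)) ->
  forall B, exists b, p0 <= b /\ B < RInt f p0 b.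
Proof.
intros Hc Hp Hp0 Hstep B.
destruct (continuous_ge_half_right f p0 (Hc p0) Hp0) as [d [Hd Hnear]].
assert (Hk : forall k r, 0 <= r <= d -> f p0 / 2 <= f (p0 + r + INR k)).
{ induction k as [|k IH]; intros r Hr.
  - rewrite Rplus_0_r. auto.
  - rewrite S_INR, <- Rplus_assoc. specialize (IH r Hr).
    apply Rle_trans with (f (p0 + r + INR k)); auto. apply Hstep. lra. }
assert (Hint : forall K, INR K * (d * (f p0 / 2)) <= RInt f p0 (p0 + INR K)).
{ induction K as [|K IH].
  - rewrite Rplus_0_r, RInt_point. unfold zero; simpl. lra.
  - rewrite S_INR.
    rewrite <- (RInt_Chasles f p0 (p0 + INR K) (p0 + (INR K + 1))),
      <- (RInt_Chasles f (p0 + INR K) (p0 + INR K + d) (p0 + (INR K + 1)))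
      by (apply ex_RInt_cont; auto).
    assert (f p0 / 2 * (p0 + INR K + d - (p0 + INR K))
      <= RInt f (p0 + INR K) (p0 + INR K + d)).
    { apply RInt_ge_const; auto; [lra|]. intros t Ht.
      replace t with (p0 + (t - p0 - INR K) + INR K) by ring. apply Hk. lra. }
    assert (0 <= RInt f (p0 + INR K + d) (p0 + (INR K + 1))) by (apply RInt_ge0; auto; lra).
    unfold plus; simpl. nra. }
assert (Hpos : 0 < d * (f p0 / 2)) by nra.
destruct (INR_archimed _ B Hpos) as [K HK].
exists (p0 + INR K). split; [pose proof (pos_INR K); lra|].
specialize (Hint K). lra.
Qed.

Definition geometric_decay (f : R -> R) : Prop :=
  exists p rho, 0 <= rho < 1 /\ forall u, p <= u -> f (u + 1) <= rho * f u.

(* The shift inequality says that f (u + 1) / f u is nonincreasing in u, so one strict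
   decrease at p gives the rate rho = f (p + 1) / f p from p on. *)
Lemma geometric_decay_of_shift_ineq (f : R -> R) B :
  (forall t, continuous f t) -> (forall t, 0 <= f t) ->
  (forall u v, u <= v -> f u * f (v + 1) <= f (u + 1) * f v) ->
  (forall a b, a <= b -> RInt f a b <= B) -> geometric_decay f.
Proof.
intros Hc Hp Hshift HB.
destruct (classic (exists p, 0 < f p /\ f (p + 1) < f p)) as [[p [Hfp Hdrop]]|Hno_drop].
- exists p, (f (p + 1) / f p).
  pose proof (Hp (p + 1)).
  assert (Hrate : f (p + 1) / f p * f p = f (p + 1)) by (field; lra).
  split; [split; [apply Rdiv_le_0_compat | apply Rmult_lt_reg_r with (f p)]; lra|].
  intros u Hu. specialize (Hshift p u Hu).
  apply Rmult_le_reg_l with (f p); [lra|].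
  replace (f p * (f (p + 1) / f p * f u)) with (f (p + 1) * f u) by (field; lra). lra.
- destruct (classic (exists p0, 0 < f p0)) as [[p0 Hp0]|Hzero].
  + exfalso.
    assert (Hstep : forall p, 0 < f p -> f p <= f (p + 1)).
    { intros p Hfp. apply Rnot_lt_le. intros Hlt. apply Hno_drop. eauto. }
    destruct (RInt_unbounded_of_step_nondecreasing f p0 Hc Hp Hp0 Hstep B) as [b [Hb HBb]].
    specialize (HB p0 b Hb). lra.
  + exists 0, 0. split; [lra|]. intros u _.
    assert (Hf0 : forall t, f t = 0).
    { intros t. destruct (Hp t) as [Ht|Ht]; auto. exfalso; apply Hzero; eauto. }
    rewrite !Hf0. lra.
Qed.

Lemma Rabs_alt_mult k z : 0 <= z -> Rabs ((-1) ^ k * z) = z.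
Proof. intros. rewrite Rabs_mult, pow_1_abs, Rabs_right; lra. Qed.

Lemma ex_series_geom_scal rho c : 0 <= rho < 1 -> ex_series (fun j => c * rho ^ j).
Proof.
intros H. apply (ex_series_scal_l (K := R_AbsRing) (V := R_NormedModule)).
apply ex_series_geom. rewrite Rabs_right; lra.
Qed.

Lemma Rabs_Series_le_geom (a : nat -> R) c rho : 0 <= rho < 1 ->
  (forall j, Rabs (a j) <= c * rho ^ j) -> Rabs (Series a) <= c / (1 - rho).
Proof.
intros Hrho Ha.
assert (Hex : ex_series (fun j => Rabs (a j))).
{ apply (ex_series_le (V := R_CompleteNormedModule)) with (b := fun j => c * rho ^ j).
  - intros j. change (norm ?x) with (Rabs x). rewrite Rabs_Rabsolu. apply Ha.
  - apply ex_series_geom_scal; auto. }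
eapply Rle_trans; [apply Series_Rabs, Hex|].
eapply Rle_trans; [apply Series_le; [|apply ex_series_geom_scal, Hrho]|].
- intros j. split; [apply Rabs_pos|apply Ha].
- rewrite Series_scal_l, Series_geom by (rewrite Rabs_right; lra). right; field; lra.
Qed.

Section AlternatingShifts.
Variables (f : R -> R) (p rho : R).
Hypothesis Hrho : 0 <= rho < 1.
Hypothesis Hf0 : forall t, 0 <= f t.
Hypothesis Hdecay : forall u, p <= u -> f (u + 1) <= rho * f u.

Lemma decay_shift_INR u : p <= u -> forall k, f (u + INR k) <= rho ^ k * f u.
Proof.
intros Hu k. induction k as [|k IH].
- simpl. rewrite Rplus_0_r. lra.
- rewrite S_INR, <- Rplus_assoc. simpl. rewrite Rmult_assoc.
  apply Rle_trans with (rho * f (u + INR k)).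
  + apply Hdecay. pose proof (pos_INR k); lra.
  + apply Rmult_le_compat_l; [lra | exact IH].
Qed.

Lemma ex_series_alt_shift y : ex_series (fun k => (-1) ^ k * f (y + INR k)).
Proof.
destruct (nat_above (p - y)) as [K HK].
apply (proj2 (ex_series_incr_n (V := R_NormedModule) _ K)).
apply (ex_series_le (V := R_CompleteNormedModule)) with (b := fun j => f (y + INR K) * rho ^ j).
- intros j. change (norm ?x) with (Rabs x). rewrite Rabs_alt_mult by auto.
  rewrite plus_INR, <- Rplus_assoc, Rmult_comm.
  apply decay_shift_INR; lra.
- apply ex_series_geom_scal; auto.
Qed.

(* Past p the terms are dominated by rho ^ (N - K) times the maximum of f on the compact
   [lo + K, hi + K], uniformly in y. *)
Lemma alt_shift_tail_small : (forall t, continuous f t) ->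
  forall lo hi, lo <= hi -> forall eps, 0 < eps -> exists N0, forall N, (N0 <= N)%nat ->
  forall y, lo <= y <= hi -> Rabs (Series (fun j => (-1) ^ (N + j) * f (y + INR (N + j)))) <= eps.
Proof.
intros Hc lo hi Hlh eps Heps.
destruct (nat_above (p - lo)) as [K HK].
destruct (continuity_ab_maj f (lo + INR K) (hi + INR K) ltac:(lra))
  as [Mx [HM _]]; [intros c _; apply continuity_pt_filterlim, Hc|].
set (M := f Mx). assert (HM0 : 0 <= M) by apply Hf0.
assert (Hy : 0 < eps * (1 - rho) / (M + 1)).
{ apply Rdiv_lt_0_compat; [apply Rmult_lt_0_compat|]; lra. }
destruct (pow_lt_1_zero rho ltac:(rewrite Rabs_right; lra) _ Hy) as [N1 HN1].
exists (K + N1)%nat. intros N HN y Hy'.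
destruct (Nat.le_exists_sub K N) as [m [-> _]]; [lia|].
specialize (HN1 m ltac:(lia)). rewrite Rabs_right in HN1 by (apply Rle_ge, pow_le; lra).
apply Rle_trans with (rho ^ m * M / (1 - rho)).
- apply Rabs_Series_le_geom; auto. intros j.
  rewrite Rabs_alt_mult by auto.
  replace (y + INR (m + K + j)) with ((y + INR K) + INR (m + j)) by (rewrite !plus_INR; ring).
  eapply Rle_trans; [apply decay_shift_INR; lra|].
  rewrite pow_add. assert (f (y + INR K) <= M) by (apply HM; lra).
  assert (0 <= rho ^ m) by (apply pow_le; lra). assert (0 <= rho ^ j) by (apply pow_le; lra).
  replace (rho ^ m * M * rho ^ j) with (rho ^ m * rho ^ j * M) by ring.
  apply Rmult_le_compat_l; [apply Rmult_le_pos|]; auto.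
- apply Rle_div_l; [lra|]. apply Rlt_div_r in HN1; [|lra]. nra.
Qed.

End AlternatingShifts.

(** * Partial sums and the periodization of integrals *)

Fixpoint psum (c : nat -> R) (N : nat) : R :=
  match N with O => 0 | S n => psum c n + c n end.

Lemma psum_ext c d N : (forall k, c k = d k) -> psum c N = psum d N.
Proof. intros H. induction N as [|N IH]; simpl; rewrite ?IH, ?H; reflexivity. Qed.

Lemma psum_mult_r c r N : psum (fun k => c k * r) N = psum c N * r.
Proof. induction N as [|N IH]; simpl; [ring|rewrite IH; ring]. Qed.

Lemma is_series_tail c s N : is_series c s -> is_series (fun j => c (N + j)%nat) (s - psum c N).
Proof.
intros H. induction N as [|N IH]; simpl.
- rewrite Rminus_0_r. exact H.
- replace (s - (psum c N + c N)) with (minus (s - psum c N) (c (N + 0)%nat))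
    by (rewrite Nat.add_0_r; unfold minus, plus, opp; simpl; ring).
  apply (is_series_ext (fun j => c (N + S j)%nat)); [intros j; f_equal; lia|].
  apply (is_series_incr_1 (V := R_NormedModule) (fun j => c (N + j)%nat)).
  replace (plus _ _) with (s - psum c N) by (unfold minus, plus, opp; simpl; ring). exact IH.
Qed.

Lemma continuous_Rplus (f g : R -> R) t :
  continuous f t -> continuous g t -> continuous (fun x => f x + g x) t.
Proof. intros. apply (continuous_plus (V := R_NormedModule) f g); auto. Qed.

Lemma continuous_Rmult (f g : R -> R) t :
  continuous f t -> continuous g t -> continuous (fun x => f x * g x) t.
Proof. intros. apply (continuous_mult (K := R_AbsRing) f g); auto. Qed.

Lemma continuous_shift (f : R -> R) v t : (forall t, continuous f t) ->
  continuous (fun x => f (x + v)) t.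
Proof.
intros H. apply (continuous_comp (fun x => x + v) f); [|apply H].
apply continuous_Rplus; [apply continuous_id|apply continuous_const].
Qed.

Lemma continuous_reflect (f : R -> R) t : (forall t, continuous f t) ->
  continuous (fun x => f (- x)) t.
Proof.
intros H. apply (continuous_comp (fun x => - x) f); [|apply H].
apply (continuous_opp (V := R_NormedModule)), continuous_id.
Qed.

Lemma continuous_psum (F : nat -> R -> R) N t : (forall k, continuous (F k) t) ->
  continuous (fun x => psum (fun k => F k x) N) t.
Proof.
intros H. induction N as [|N IH]; simpl; [apply continuous_const|].
apply continuous_Rplus; auto.
Qed.

Lemma RInt_psum (F : nat -> R -> R) a b N : (forall k t, continuous (F k) t) ->
  RInt (fun x => psum (fun k => F k x) N) a b = psum (fun k => RInt (F k) a b) N.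
Proof.
intros H. induction N as [|N IH]; simpl.
- rewrite RInt_const. unfold scal; simpl; unfold mult; simpl. ring.
- rewrite <- IH. apply (RInt_plus (V := R_CompleteNormedModule)); apply ex_RInt_cont; auto.
  intros t. apply continuous_psum. auto.
Qed.

Lemma RInt_0_INR (f : R -> R) N : (forall t, continuous f t) ->
  RInt f 0 (INR N) = psum (fun k => RInt f (INR k) (INR k + 1)) N.
Proof.
intros Hc. induction N as [|N IH]; cbn [psum].
- rewrite RInt_point. reflexivity.
- rewrite <- IH, S_INR. symmetry. apply (RInt_Chasles f); apply ex_RInt_cont; auto.
Qed.

Lemma RInt_opp_INR_0 (f : R -> R) N : (forall t, continuous f t) ->
  RInt f (- INR N) 0 = psum (fun k => RInt f (- INR k - 1) (- INR k)) N.
Proof.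
intros Hc. induction N as [|N IH]; cbn [psum].
- simpl. rewrite Ropp_0, RInt_point. reflexivity.
- rewrite <- IH, S_INR, (Rplus_comm (RInt f (- INR N) 0)). replace (- (INR N + 1)) with (- INR N - 1) by ring.
  symmetry. apply (RInt_Chasles f); apply ex_RInt_cont; auto.
Qed.

Lemma RInt_symmetric_tendsto (f : R -> R) L :
  is_RInt_gen f (Rbar_locally m_infty) (Rbar_locally p_infty) L ->
  forall eps, 0 < eps -> exists N0, forall N, (N0 <= N)%nat ->
  Rabs (RInt f (- INR N) (INR N) - L) < eps.
Proof.
intros HL eps Heps.
destruct (HL (ball L (mkposreal _ Heps)) (locally_ball _ _)) as [Q P [M1 HM1] [M2 HM2] Hqp].
destruct (nat_above (Rmax (- M1) M2 + 1)) as [N0 HN0].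
pose proof (Rmax_l (- M1) M2). pose proof (Rmax_r (- M1) M2).
exists N0. intros N HN. apply le_INR in HN.
destruct (Hqp (- INR N) (INR N)) as [y [Hy Hball]]; [apply HM1; lra | apply HM2; lra |].
simpl in Hy. rewrite (is_RInt_unique f _ _ y Hy). exact Hball.
Qed.

Definition zak_term_pos (g : R -> R) x k := (-1) ^ k * g (x + INR k).
Definition zak_term_neg (g : R -> R) x k := (-1) ^ (S k) * g (x - INR (S k)).
Definition zak_partial (g : R -> R) x N := psum (zak_term_pos g x) N + psum (zak_term_neg g x) N.

Section Antiperiodic.
Variables g phi : R -> R.
Hypothesis Hgc : forall t, continuous g t.
Hypothesis Hphic : forall t, continuous phi t.
Hypothesis Hphi_anti : forall t, phi (t + 1) = - phi t.

Lemma antiperiodic_shift_INR x k : phi (x + INR k) = (-1) ^ k * phi x.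
Proof.
induction k as [|k IH].
- simpl. rewrite Rplus_0_r. ring.
- rewrite S_INR, <- Rplus_assoc, Hphi_anti, IH. simpl. ring.
Qed.

Lemma antiperiodic_shift_opp_INR x k : phi (x - INR k) = (-1) ^ k * phi x.
Proof.
pose proof (antiperiodic_shift_INR (x - INR k) k) as E.
replace (x - INR k + INR k) with x in E by ring.
rewrite E, <- Rmult_assoc, <- Rpow_mult_distr.
replace (-1 * -1) with 1 by ring. rewrite pow1. ring.
Qed.

Lemma continuous_zak_term_pos_mult k t : continuous (fun x => zak_term_pos g x k * phi x) t.
Proof.
apply continuous_Rmult; auto.
apply continuous_Rmult; [apply continuous_const | apply continuous_shift; auto].
Qed.

Lemma continuous_zak_term_neg_mult k t : continuous (fun x => zak_term_neg g x k * phi x) t.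
Proof.
apply continuous_Rmult; auto.
apply continuous_Rmult; [apply continuous_const | apply (continuous_shift g (- INR (S k))); auto].
Qed.

(* The integral over [-N, N] is cut into unit intervals, each translated back to [0, 1];
   antiperiodicity turns the translated phi into the signs of the Zak series. *)
Lemma RInt_symmetric_eq_zak_partial N :
  RInt (fun t => g t * phi t) (- INR N) (INR N) = RInt (fun x => zak_partial g x N * phi x) 0 1.
Proof.
set (h := fun t => g t * phi t).
assert (Hhc : forall t, continuous h t) by (intros; apply continuous_Rmult; auto).
assert (Hpos : forall k, RInt h (INR k) (INR k + 1)
  = RInt (fun x => zak_term_pos g x k * phi x) 0 1).
{ intros k. rewrite <- (Rplus_0_l (INR k)) at 1. rewrite (Rplus_comm (INR k) 1).
  rewrite <- RInt_shift by auto. f_equal. extensionality x.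
  unfold h, zak_term_pos. rewrite antiperiodic_shift_INR. ring. }
assert (Hneg : forall k, RInt h (- INR k - 1) (- INR k)
  = RInt (fun x => zak_term_neg g x k * phi x) 0 1).
{ intros k. replace (- INR k - 1) with (0 + - INR (S k)) by (rewrite S_INR; ring).
  replace (- INR k) with (1 + - INR (S k)) by (rewrite S_INR; ring).
  rewrite <- RInt_shift by auto. f_equal. extensionality x.
  unfold h, zak_term_neg. replace (x + - INR (S k)) with (x - INR (S k)) by ring.
  rewrite antiperiodic_shift_opp_INR. ring. }
rewrite <- (RInt_Chasles h (- INR N) 0 (INR N)) by (apply ex_RInt_cont; auto).
rewrite (RInt_0_INR h N Hhc), (RInt_opp_INR_0 h N Hhc), (psum_ext _ _ N Hpos), (psum_ext _ _ N Hneg).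
rewrite <- (RInt_psum (fun k x => zak_term_pos g x k * phi x)) by apply continuous_zak_term_pos_mult.
rewrite <- (RInt_psum (fun k x => zak_term_neg g x k * phi x)) by apply continuous_zak_term_neg_mult.
rewrite <- (RInt_plus (V := R_CompleteNormedModule)) by
  (apply ex_RInt_cont; intros t; apply continuous_psum; intros k;
   apply continuous_zak_term_pos_mult || apply continuous_zak_term_neg_mult).
f_equal. extensionality x. unfold zak_partial. rewrite !psum_mult_r.
unfold plus; simpl. ring.
Qed.

Lemma improper_integral_eq0_of_zak_partial_small L : (forall t, Rabs (phi t) <= 1) ->
  (forall eps, 0 < eps -> exists N0, forall N, (N0 <= N)%nat ->
     forall x, 0 <= x <= 1 -> Rabs (zak_partial g x N) <= eps) ->
  is_RInt_gen (fun t => g t * phi t) (Rbar_locally m_infty) (Rbar_locally p_infty) L -> L = 0.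
Proof.
intros Hphi1 Hsmall HL.
destruct (Req_dec L 0) as [|HL0]; auto. exfalso.
assert (He : 0 < Rabs L / 2) by (pose proof (Rabs_pos_lt L HL0); lra).
destruct (Hsmall _ He) as [N1 HN1]. destruct (RInt_symmetric_tendsto _ L HL _ He) as [N2 HN2].
specialize (HN2 (N1 + N2)%nat ltac:(lia)).
assert (Hbound : Rabs (RInt (fun t => g t * phi t) (- INR (N1 + N2)) (INR (N1 + N2)))
  <= (1 - 0) * (Rabs L / 2)).
{ rewrite RInt_symmetric_eq_zak_partial. apply abs_RInt_le_const; [lra| |].
  - apply ex_RInt_cont. intros t. apply continuous_Rmult; auto.
    unfold zak_partial. apply continuous_Rplus; apply continuous_psum; intros k;
      apply continuous_Rmult; try apply continuous_const; apply continuous_shift; auto.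
  - intros x Hx. rewrite Rabs_mult.
    specialize (HN1 (N1 + N2)%nat ltac:(lia) x Hx). pose proof (Hphi1 x).
    pose proof (Rabs_pos (phi x)). pose proof (Rabs_pos (zak_partial g x (N1 + N2))). nra. }
pose proof (Rabs_triang_inv L (RInt (fun t => g t * phi t) (- INR (N1 + N2)) (INR (N1 + N2)))).
rewrite Rabs_minus_sym in HN2. lra.
Qed.

End Antiperiodic.

(** * The Zak transform at 1/2 *)

Lemma is_RInt_gen_fst (f : R -> C) (Fa Fb : (R -> Prop) -> Prop) (l : C) :
  Filter Fa -> Filter Fb ->
  is_RInt_gen f Fa Fb l -> is_RInt_gen (fun t => fst (f t)) Fa Fb (fst l).
Proof.
intros FFa FFb H P [eps HP].
assert (Hl : locally l (fun y : C => P (fst y))) by (exists eps; intros y [Hy _]; apply HP, Hy).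
specialize (H _ Hl). unfold filtermapi in *.
eapply filter_imp; [|exact H].
intros [a b] [y [Hy HPy]]. exists (fst y). split; auto. simpl in *.
apply (is_RInt_fct_extend_fst (U := R_NormedModule) (V := R_NormedModule) f a b y Hy).
Qed.

Lemma is_RInt_gen_snd (f : R -> C) (Fa Fb : (R -> Prop) -> Prop) (l : C) :
  Filter Fa -> Filter Fb ->
  is_RInt_gen f Fa Fb l -> is_RInt_gen (fun t => snd (f t)) Fa Fb (snd l).
Proof.
intros FFa FFb H P [eps HP].
assert (Hl : locally l (fun y : C => P (snd y))) by (exists eps; intros y [_ Hy]; apply HP, Hy).
specialize (H _ Hl). unfold filtermapi in *.
eapply filter_imp; [|exact H].
intros [a b] [y [Hy HPy]]. exists (snd y). split; auto. simpl in *.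
apply (is_RInt_fct_extend_snd (U := R_NormedModule) (V := R_NormedModule) f a b y Hy).
Qed.

Definition cnorm2 (z : C) : R := fst z ^ 2 + snd z ^ 2.

Lemma improper_integral_of_fourier_0 g v : is_fourier g 0 v ->
  is_RInt_gen g (Rbar_locally m_infty) (Rbar_locally p_infty) (fst v).
Proof.
intros Hv. unfold is_fourier in Hv. apply is_RInt_gen_fst in Hv; try apply Rbar_locally_filter.
replace g with (fun t => fst (Cmult (RtoC (g t)) (cexpi (- (2 * PI * t * 0))))); [exact Hv|].
extensionality t. unfold Cmult, RtoC, cexpi; simpl.
rewrite Rmult_0_r, Ropp_0, cos_0, sin_0. ring.
Qed.

Definition half_kernel (t : R) : C := cexpi (- (2 * PI * t * (1 / 2))).

Lemma half_kernel_antiperiodic t : half_kernel (t + 1) = Copp (half_kernel t).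
Proof.
unfold half_kernel, cexpi, Copp.
replace (- (2 * PI * (t + 1) * (1 / 2))) with (- (2 * PI * t * (1 / 2)) - PI) by field.
rewrite cos_minus, sin_minus, cos_PI, sin_PI. f_equal; simpl; ring.
Qed.

Lemma continuous_half_kernel t :
  continuous (fun t => fst (half_kernel t)) t /\ continuous (fun t => snd (half_kernel t)) t.
Proof.
split; apply (ex_derive_continuous (K := R_AbsRing) (V := R_NormedModule));
  unfold half_kernel, cexpi; simpl; auto_derive; auto.
Qed.

Definition zak (g : R -> R) x := Series (zak_term_pos g x) + Series (zak_term_neg g x).

Section ZakHalf.
Variable g : R -> R.
Hypothesis Hgc : forall t, continuous g t.
Hypothesis Hg0 : forall t, 0 <= g t.
Hypothesis Hdecay : geometric_decay g.
Hypothesis Hdecay_opp : geometric_decay (fun t => g (- t)).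

Lemma zak_term_neg_reflect x k :
  zak_term_neg g x k = (-1) ^ (S k) * g (- (- x + INR (S k))).
Proof. unfold zak_term_neg. do 2 f_equal. ring. Qed.

Lemma ex_series_zak_term_pos x : ex_series (zak_term_pos g x).
Proof. destruct Hdecay as (p & rho & Hrho & Hd). apply (ex_series_alt_shift g p rho); auto. Qed.

Lemma ex_series_zak_term_neg x : ex_series (zak_term_neg g x).
Proof.
destruct Hdecay_opp as (p & rho & Hrho & Hd).
pose proof (ex_series_alt_shift _ p rho Hrho (fun t => Hg0 (- t)) Hd (- x)) as H.
apply (ex_series_incr_1 (V := R_NormedModule)) in H.
eapply ex_series_ext; [|exact H]. intros k. symmetry. apply zak_term_neg_reflect.
Qed.

Lemma is_zak_half_zak x : is_zak_half g x (zak g x).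
Proof.
exists (Series (zak_term_pos g x)), (Series (zak_term_neg g x)).
split; [|split]; try apply Series_correct; auto.
- apply ex_series_zak_term_pos.
- apply ex_series_zak_term_neg.
Qed.

(* Shifting x by 1 moves one term from one half of the Zak series to the other and
   changes the sign of all others. *)
Lemma zak_shift_1 x : zak g (x + 1) = - zak g x.
Proof.
unfold zak.
rewrite (Series_incr_1 (zak_term_pos g x)) by apply ex_series_zak_term_pos.
rewrite (Series_incr_1 (zak_term_neg g (x + 1))) by apply ex_series_zak_term_neg.
rewrite (Series_ext (fun k => zak_term_pos g x (S k)) (fun k => -1 * zak_term_pos g (x + 1) k)).
2: { intros k. unfold zak_term_pos. rewrite S_INR.
     replace (x + (INR k + 1)) with (x + 1 + INR k) by ring. simpl. ring. }
rewrite (Series_ext (fun k => zak_term_neg g (x + 1) (S k)) (fun k => -1 * zak_term_neg g x k)).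
2: { intros k. unfold zak_term_neg. rewrite !S_INR.
     replace (x + 1 - (INR k + 1 + 1)) with (x - (INR k + 1)) by ring. simpl. ring. }
rewrite !Series_scal_l. unfold zak_term_pos, zak_term_neg. simpl.
replace (x + 0) with x by ring. replace (x + 1 - 1) with x by ring. ring.
Qed.

Lemma zak_periodic_2 x : zak g (x + 2) = zak g x.
Proof. replace (x + 2) with (x + 1 + 1) by ring. rewrite !zak_shift_1. ring. Qed.

Lemma zak_partial_eq_sub_tails x N : zak_partial g x N =
  zak g x - (Series (fun j => zak_term_pos g x (N + j)) + Series (fun j => zak_term_neg g x (N + j))).
Proof.
unfold zak, zak_partial.
rewrite (is_series_unique _ _ (is_series_tail _ _ N (Series_correct _ (ex_series_zak_term_pos x)))).
rewrite (is_series_unique _ _ (is_series_tail _ _ N (Series_correct _ (ex_series_zak_term_neg x)))).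
ring.
Qed.

Lemma zak_partial_small_of_zak_eq0 : (forall x, zak g x = 0) ->
  forall eps, 0 < eps -> exists N0, forall N, (N0 <= N)%nat ->
  forall x, 0 <= x <= 1 -> Rabs (zak_partial g x N) <= eps.
Proof.
intros Hzero eps Heps.
destruct Hdecay as (p1 & rho1 & Hrho1 & Hd1).
destruct Hdecay_opp as (p2 & rho2 & Hrho2 & Hd2).
destruct (alt_shift_tail_small g p1 rho1 Hrho1 Hg0 Hd1 Hgc 0 1 ltac:(lra) (eps / 2))
  as [N1 HN1]; [lra|].
destruct (alt_shift_tail_small _ p2 rho2 Hrho2 (fun t => Hg0 (- t)) Hd2
  (fun t => continuous_reflect g t Hgc)
  (-1) 0 ltac:(lra) (eps / 2)) as [N2 HN2]; [lra|].
exists (N1 + N2)%nat. intros N HN x Hx.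
rewrite zak_partial_eq_sub_tails, Hzero, Rminus_0_l, Rabs_Ropp.
eapply Rle_trans; [apply Rabs_triang|].
assert (Hneg : Rabs (Series (fun j => zak_term_neg g x (N + j))) <= eps / 2).
{ rewrite (Series_ext _ (fun j => (-1) ^ (S N + j) * g (- (- x + INR (S N + j))))).
  - apply (HN2 (S N)); [lia|lra].
  - intros j. apply zak_term_neg_reflect. }
specialize (HN1 N ltac:(lia) x Hx). unfold zak_term_pos. lra.
Qed.

Lemma zak_not_identically_zero v : is_fourier g (1 / 2) v -> 0 < cnorm2 v ->
  exists x, zak g x <> 0.
Proof.
intros Hv Hpos. apply NNPP. intros Hno.
assert (Hzero : forall x, zak g x = 0) by (intros x; apply NNPP; eauto).
pose proof (zak_partial_small_of_zak_eq0 Hzero) as Hsmall.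
unfold is_fourier in Hv.
assert (Hphi1 : forall t, Rabs (fst (half_kernel t)) <= 1)
  by (intros t; apply Rabs_le, COS_bound).
assert (Hphi2 : forall t, Rabs (snd (half_kernel t)) <= 1)
  by (intros t; apply Rabs_le, SIN_bound).
assert (Hre : fst v = 0).
{ apply (improper_integral_eq0_of_zak_partial_small g (fun t => fst (half_kernel t)) Hgc
    (fun t => proj1 (continuous_half_kernel t)) (fun t => f_equal fst (half_kernel_antiperiodic t))
    _ Hphi1 Hsmall).
  apply is_RInt_gen_fst in Hv; try apply Rbar_locally_filter.
  replace (fun t => g t * fst (half_kernel t))
    with (fun t => fst (Cmult (RtoC (g t)) (half_kernel t))); [exact Hv|].
  extensionality t. unfold Cmult, RtoC; simpl. ring. }
assert (Him : snd v = 0).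
{ apply (improper_integral_eq0_of_zak_partial_small g (fun t => snd (half_kernel t)) Hgc
    (fun t => proj2 (continuous_half_kernel t)) (fun t => f_equal snd (half_kernel_antiperiodic t))
    _ Hphi2 Hsmall).
  apply is_RInt_gen_snd in Hv; try apply Rbar_locally_filter.
  replace (fun t => g t * snd (half_kernel t))
    with (fun t => snd (Cmult (RtoC (g t)) (half_kernel t))); [exact Hv|].
  extensionality t. unfold Cmult, RtoC; simpl. ring. }
unfold cnorm2 in Hpos. rewrite Hre, Him in Hpos. simpl in Hpos. lra.
Qed.

End ZakHalf.

(** * The Fourier transform at 1/2 *)

Lemma cnorm2_mult z w : cnorm2 (Cmult z w) = cnorm2 z * cnorm2 w.
Proof. destruct z, w. unfold cnorm2, Cmult; simpl. ring. Qed.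

Lemma cnorm2_factor a w : cnorm2 (factor a w) = / (1 + (2 * PI * w / a) ^ 2).
Proof.
unfold factor, Cdiv. rewrite cnorm2_mult.
set (c := 2 * PI * w / a).
replace (Cplus (RtoC 1) (Cmult Ci (RtoC c))) with ((1, c) : C)
  by (unfold Cplus, Cmult, Ci, RtoC; simpl; f_equal; ring).
unfold cnorm2, cexpi, Cinv. cbn [fst snd].
pose proof (sin2_cos2 c) as Hsc. unfold Rsqr in Hsc.
replace (cos c ^ 2 + sin c ^ 2) with 1 by (simpl; lra).
assert (0 < 1 + c ^ 2) by (pose proof (pow2_ge_0 c); lra).
field. lra.
Qed.

Lemma cnorm2_partial_prod_pos a w N : 0 < cnorm2 (partial_prod a w N).
Proof.
induction N as [|N IH]; simpl.
- unfold cnorm2, RtoC; simpl. lra.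
- rewrite cnorm2_mult, cnorm2_factor. apply Rmult_lt_0_compat; auto.
  apply Rinv_0_lt_compat. pose proof (pow2_ge_0 (2 * PI * w / a N)). lra.
Qed.

Lemma exp_opp_le_inv x : 0 <= x -> exp (- x) <= / (1 + x).
Proof. intros Hx. rewrite exp_Ropp. apply Rinv_le_contravar; [lra|]. apply exp_ineq1_le. Qed.

(* Each factor has |factor a w|^2 = 1 / (1 + c) with c = (2 pi w / a)^2, and 1 / (1 + c) >= exp (-c). *)
Lemma cnorm2_partial_prod_ge a w N : (forall nu, a nu <> 0) ->
  exp (- ((2 * PI * w) ^ 2 * psum (fun nu => / (a nu ^ 2)) N)) <= cnorm2 (partial_prod a w N).
Proof.
intros Ha. induction N as [|N IH]; cbn [partial_prod psum].
- unfold cnorm2, RtoC; simpl. rewrite Rmult_0_r, Ropp_0, exp_0. lra.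
- rewrite cnorm2_mult, cnorm2_factor, Rmult_plus_distr_l, Ropp_plus_distr, exp_plus.
  replace ((2 * PI * w / a N) ^ 2) with ((2 * PI * w) ^ 2 * / (a N ^ 2)) by (field; auto).
  assert (0 < a N ^ 2) by (apply pow2_gt_0, Ha).
  assert (0 <= (2 * PI * w) ^ 2 * / (a N ^ 2)).
  { apply Rmult_le_pos; [apply pow2_ge_0 | left; apply Rinv_0_lt_compat; auto]. }
  apply Rmult_le_compat; try (left; apply exp_pos); auto.
  apply exp_opp_le_inv; auto.
Qed.

Lemma psum_le_series c s N : (forall n, 0 <= c n) -> is_series c s -> psum c N <= s.
Proof.
intros Hc Hs. pose proof (is_series_tail c s N Hs) as Htail.
assert (0 <= s - psum c N); [|lra].
replace 0 with (Series (fun n => 0 * c (N + n)%nat)) by (rewrite Series_scal_l; ring).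
rewrite <- (is_series_unique _ _ Htail).
apply Series_le; [intros n; pose proof (Hc (N + n)%nat); split; lra | eexists; exact Htail].
Qed.

Lemma cnorm2_lim_pos (u : nat -> C) v d : 0 < d -> (forall N, d <= cnorm2 (u N)) ->
  filterlim u eventually (locally v) -> 0 < cnorm2 v.
Proof.
intros Hd Hu Hlim.
destruct (Rle_lt_dec (cnorm2 v) 0) as [Hv0|]; [exfalso|auto].
unfold cnorm2 in Hv0. assert (fst v = 0 /\ snd v = 0) as [Hv1 Hv2] by (split; nra).
pose proof (Rmin_l (d / 2) (1 / 2)). pose proof (Rmin_r (d / 2) (1 / 2)).
assert (Hr : 0 < Rmin (d / 2) (1 / 2)) by (apply Rmin_pos; lra).
set (r := Rmin (d / 2) (1 / 2)) in *.
destruct (Hlim (ball v (mkposreal _ Hr)) (locally_ball _ _)) as [N0 HN0].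
destruct (HN0 N0 (le_n _)) as [B1 B2].
unfold ball in B1, B2; simpl in B1, B2; unfold AbsRing_ball, abs, minus, plus, opp in B1, B2;
  simpl in B1, B2.
rewrite Hv1 in B1. rewrite Hv2 in B2.
apply Rabs_lt_between in B1. apply Rabs_lt_between in B2.
specialize (Hu N0). unfold cnorm2 in Hu.
set (x1 := fst (u N0)) in *. set (x2 := snd (u N0)) in *.
assert (x1 ^ 2 < r * r) by (simpl; nra). assert (x2 ^ 2 < r * r) by (simpl; nra).
assert (r * r <= r / 2) by nra. lra.
Qed.

Lemma infinite_product_lim_pos a w v : (forall nu, a nu <> 0) ->
  ex_series (fun nu => / (a nu ^ 2)) ->
  filterlim (fun N => partial_prod a w N) eventually (locally v) -> 0 < cnorm2 v.
Proof.
intros Ha [S HS] Hlim.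
assert (Hc : forall n, 0 <= / (a n ^ 2)).
{ intros n. left; apply Rinv_0_lt_compat, pow2_gt_0, Ha. }
apply (cnorm2_lim_pos (fun N => partial_prod a w N) v (exp (- ((2 * PI * w) ^ 2 * S)))); [apply exp_pos | | exact Hlim].
intros N. eapply Rle_trans; [|apply cnorm2_partial_prod_ge; auto].
assert (Hmono : - ((2 * PI * w) ^ 2 * S)
  <= - ((2 * PI * w) ^ 2 * psum (fun nu => / (a nu ^ 2)) N)).
{ apply Ropp_le_contravar, Rmult_le_compat_l; [apply pow2_ge_0 | apply psum_le_series; auto]. }
destruct (Rle_lt_or_eq_dec _ _ Hmono) as [Hlt|Heq]; [left; apply exp_increasing, Hlt | rewrite Heq; lra].
Qed.

Lemma fourier_nonzero_at_half (g : R -> R) :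
  ((exists a : nat -> R,
       (forall nu, a nu <> 0) /\
       ex_series (fun nu => / (a nu ^ 2)) /\
       forall w, exists v : C,
         is_fourier g w v /\
         filterlim (fun N => partial_prod a w N) eventually (locally v))
    \/
    (exists (n : nat) (a : nat -> R),
       (forall nu, (nu < n)%nat -> a nu <> 0) /\
       forall w, is_fourier g w (partial_prod a w n))) ->
  exists v0 v, is_fourier g 0 v0 /\ is_fourier g (1 / 2) v /\ 0 < cnorm2 v.
Proof.
intros [[a (Ha & Hs & Hf)] | (n & a & Ha & Hf)].
- destruct (Hf 0) as [v0 [Hv0 _]]. destruct (Hf (1 / 2)) as [v [Hv Hlim]].
  exists v0, v. repeat split; auto. apply (infinite_product_lim_pos a (1 / 2)); auto.
- exists (partial_prod a 0 n), (partial_prod a (1 / 2) n).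
  repeat split; auto. apply cnorm2_partial_prod_pos.
Qed.

Lemma geometric_decay_of_totally_positive g L : (forall t, continuous g t) ->
  totally_positive g -> is_RInt_gen g (Rbar_locally m_infty) (Rbar_locally p_infty) L ->
  geometric_decay g /\ geometric_decay (fun t => g (- t)).
Proof.
intros Hc HTP HL.
pose proof (TotalPositivity.ge0 g HTP) as Hg0.
pose proof (TotalPositivity.shift_ineq g HTP) as Hshift.
pose proof (RInt_le_improper g L Hc Hg0 HL) as Hbound.
split; apply geometric_decay_of_shift_ineq with L; auto.
- intros t. apply continuous_reflect, Hc.
- intros u v Huv. specialize (Hshift (- v - 1) (- u - 1) ltac:(lra)).
  replace (- (v + 1)) with (- v - 1) by ring. replace (- (u + 1)) with (- u - 1) by ring.
  replace (- u - 1 + 1) with (- u) in Hshift by ring.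
  replace (- v - 1 + 1) with (- v) in Hshift by ring. lra.
- intros a b Hab. rewrite RInt_reflect by auto. apply Hbound. lra.
Qed.

Theorem mainTheorem5 (g : R -> R) :
  (forall t, continuous g t) ->
  totally_positive g ->
  ( (* infinite case *)
    (exists a : nat -> R,
       (forall nu, a nu <> 0) /\
       ex_series (fun nu => / (a nu ^ 2)) /\
       forall w, exists v : C,
         is_fourier g w v /\
         filterlim (fun N => partial_prod a w N) eventually (locally v))
    \/
    (* finite case *)
    (exists (n : nat) (a : nat -> R),
       (forall nu, (nu < n)%nat -> a nu <> 0) /\
       forall w, is_fourier g w (partial_prod a w n)) ) ->
  exists Z : R -> R,
    (forall x, is_zak_half g x (Z x)) /\
    (forall x, Z (x + 2) = Z x) /\
    (exists x, Z x <> 0).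
Proof.
intros Hc HTP Hfourier.
destruct (fourier_nonzero_at_half g Hfourier) as (v0 & v & Hv0 & Hv & Hv_pos).
pose proof (TotalPositivity.ge0 g HTP) as Hg0.
destruct (geometric_decay_of_totally_positive g (fst v0) Hc HTP
  (improper_integral_of_fourier_0 g v0 Hv0)) as [Hdecay Hdecay_opp].
exists (zak g). split; [|split].
- apply is_zak_half_zak; auto.
- apply zak_periodic_2; auto.
- apply (zak_not_identically_zero g Hc Hg0 Hdecay Hdecay_opp v Hv Hv_pos).
Qed.
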